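(* Let $\sigma>0$, $k>0$, $\alpha\geq 0$, $\lambda\in\mathbb{R}$, and consider the linear parabolic partial differential equation for $u=u(t,x)$, $x>0$, $$u_t=\tfrac12\sigma^2x^2u_{xx}+kx(\alpha-x)u_x+\lambda x^2u .$$ Suppose $\alpha=0$ and $\lambda=\frac{k^2}{2\sigma^2}$. Then the Lie algebra of infinitesimal (point) symmetries of this equation is spanned by the six vector fields $$V_1=\partial_t,$$ $$V_2=t\partial_t+\tfrac12 x\ln x\,\partial_x+\Big(\tfrac{k}{2\sigma^2}x\ln x+\tfrac14\ln x-\tfrac{\sigma^2}{8}t\Big)u\,\partial_u,$$ $$V_3=t^2\partial_t+tx\ln x\,\partial_x+\Big(\tfrac{k}{\sigma^2}tx\ln x-\tfrac{1}{2\sigma^2}\ln^2x+\tfrac12 t\ln x-\tfrac{\sigma^2}{8}t^2-\tfrac12 t\Big)u\,\partial_u,$$ $$V_4=x\partial_x+\tfrac{k}{\sigma^2}xu\,\partial_u,\qquad V_5=tx\partial_x+\Big(\tfrac{k}{\sigma^2}tx-\tfrac{1}{\sigma^2}\ln x+\tfrac12 t\Big)u\,\partial_u,\qquad V_6=u\partial_u,$$ together with the infinite-dimensional subalgebra of vector fields $V_\varphi=\varphi(t,x)\partial_u$, where $\varphi(t,x)$ is an arbitrary solution of the equation.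
   Context: An infinitesimal symmetry is a vector field $V=\tau(t,x,u)\partial_t+\xi(t,x,u)\partial_x+\phi(t,x,u)\partial_u$ generating a one-parameter group of transformations of $(t,x,u)$ that maps solutions of the equation to solutions; equivalently, the second prolongation of $V$ applied to $\tfrac12\sigma^2x^2u_{xx}+kx(\alpha-x)u_x+\lambda x^2u-u_t$ vanishes on solutions of the equation. *)

From Stdlib Require Import Reals List.
From Coquelicot Require Import Coquelicot.
Open Scope R_scope.

(** Functions of (t, x, u) are curried: f : R -> R -> R -> R.
    The domain is Omega = { (t,x,u) | t in R, x > 0, u in R }. *)

Inductive dir := Dt | Dx | Du.

Definition pd (d : dir) (f : R -> R -> R -> R) : R -> R -> R -> R :=
  match d with
  | Dt => fun t x u => Derive (fun s => f s x u) t
  | Dx => fun t x u => Derive (fun s => f t s u) x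
  | Du => fun t x u => Derive (fun s => f t x s) u
  end.

Definition ex_pd (d : dir) (f : R -> R -> R -> R) (t x u : R) : Prop :=
  match d with
  | Dt => ex_derive (fun s => f s x u) t
  | Dx => ex_derive (fun s => f t s u) x
  | Du => ex_derive (fun s => f t x s) u
  end.

Fixpoint pds (l : list dir) (f : R -> R -> R -> R) : R -> R -> R -> R :=
  match l with
  | nil => f
  | d :: l' => pd d (pds l' f)
  end.

Definition smooth_on (f : R -> R -> R -> R) : Prop :=
  forall (l : list dir) (t x u : R), 0 < x ->
    continuous (fun p : R * R * R => pds l f (fst (fst p)) (snd (fst p)) (snd p))
               ((t, x), u)
    /\ (forall d : dir, ex_pd d (pds l f) t x u).

Definition p_t f := pd Dt f.
Definition p_x f := pd Dx f.
Definition p_u f := pd Du f.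

Definition Dx1 (f : R -> R -> R -> R) (t x u ux : R) : R :=
  p_x f t x u + ux * p_u f t x u.
Definition Dx2 (f : R -> R -> R -> R) (t x u ux uxx : R) : R :=
  p_x (p_x f) t x u + 2 * ux * p_x (p_u f) t x u
  + ux ^ 2 * p_u (p_u f) t x u + uxx * p_u f t x u.
Definition Dt1 (f : R -> R -> R -> R) (t x u ut : R) : R :=
  p_t f t x u + ut * p_u f t x u.

Definition Delta (sigma k alpha lambda : R) (x u ut ux uxx : R) : R :=
  / 2 * sigma ^ 2 * x ^ 2 * uxx + k * x * (alpha - x) * ux
  + lambda * x ^ 2 * u - ut.

(** Coefficients of the second prolongation of
    V = tau d_t + xi d_x + phi d_u  (Olver's formula
    phi^J = D_J (phi - xi u_x - tau u_t) + xi u_{J,x} + tau u_{J,t}). *)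
Definition phi_t (tau xi phi : R -> R -> R -> R) (t x u ut ux : R) : R :=
  Dt1 phi t x u ut - ux * Dt1 xi t x u ut - ut * Dt1 tau t x u ut.
Definition phi_x (tau xi phi : R -> R -> R -> R) (t x u ut ux : R) : R :=
  Dx1 phi t x u ux - ux * Dx1 xi t x u ux - ut * Dx1 tau t x u ux.
Definition phi_xx (tau xi phi : R -> R -> R -> R)
    (t x u ut ux uxx uxt : R) : R :=
  Dx2 phi t x u ux uxx - ux * Dx2 xi t x u ux uxx - ut * Dx2 tau t x u ux uxx
  - 2 * uxx * Dx1 xi t x u ux - 2 * uxt * Dx1 tau t x u ux.

(** pr^(2) V applied to Delta (Delta does not depend on t, u_tt, u_xt). *)
Definition pr2V_Delta (sigma k alpha lambda : R) (tau xi phi : R -> R -> R -> R)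
    (t x u ut ux uxx uxt : R) : R :=
  xi t x u * (sigma ^ 2 * x * uxx + k * (alpha - 2 * x) * ux + 2 * lambda * x * u)
  + phi t x u * (lambda * x ^ 2)
  + phi_x tau xi phi t x u ut ux * (k * x * (alpha - x))
  + phi_xx tau xi phi t x u ut ux uxx uxt * (/ 2 * sigma ^ 2 * x ^ 2)
  - phi_t tau xi phi t x u ut ux.

Definition is_symmetry (sigma k alpha lambda : R) (tau xi phi : R -> R -> R -> R) : Prop :=
  forall t x u ut ux uxx uxt : R, 0 < x ->
    Delta sigma k alpha lambda x u ut ux uxx = 0 ->
    pr2V_Delta sigma k alpha lambda tau xi phi t x u ut ux uxx uxt = 0.

Definition is_solution (sigma k alpha lambda : R) (psi : R -> R -> R) : Prop :=
  smooth_on (fun t x _ => psi t x) /\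
  forall t x : R, 0 < x ->
    Derive (fun s => psi s x) t =
      / 2 * sigma ^ 2 * x ^ 2 * Derive (fun s => Derive (fun r => psi t r) s) x
      + k * x * (alpha - x) * Derive (fun s => psi t s) x
      + lambda * x ^ 2 * psi t x.

Definition tauV (i : nat) (t x u : R) : R :=
  match i with
  | 1%nat => 1
  | 2%nat => t
  | 3%nat => t ^ 2
  | _ => 0
  end.

Definition xiV (i : nat) (t x u : R) : R :=
  match i with
  | 2%nat => / 2 * x * ln x
  | 3%nat => t * x * ln x
  | 4%nat => x
  | 5%nat => t * x
  | _ => 0
  end.

Definition phiV (sigma k : R) (i : nat) (t x u : R) : R :=
  match i with
  | 2%nat => (k / (2 * sigma ^ 2) * x * ln x + / 4 * ln x - sigma ^ 2 / 8 * t) * u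
  | 3%nat => (k / sigma ^ 2 * t * x * ln x - / (2 * sigma ^ 2) * (ln x) ^ 2
              + / 2 * t * ln x - sigma ^ 2 / 8 * t ^ 2 - / 2 * t) * u
  | 4%nat => k / sigma ^ 2 * x * u
  | 5%nat => (k / sigma ^ 2 * t * x - / sigma ^ 2 * ln x + / 2 * t) * u
  | 6%nat => u
  | _ => 0
  end.

(* Eliminating u_t through the equation turns pr^(2)V(Delta) into a polynomial in the free
   jet coordinates u_x, u_xx, u_xt.  Its coefficients force tau = T(t),
   xi = x (T'(t) ln x / 2 + D(t)) and phi = u (beta(t,x) + G(t)) + psi(t,x), with beta
   determined by T and D.  For this ansatz the prolongation equals
   u Q(t, ln x) + (the equation applied to psi), where Q is a quadratic polynomial in ln x
   whose vanishing means T''' = 0, D'' = 0 and G' = D'/2 - sigma^2 T'/8 - T''/4.  So psi is a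
   solution and T, D, G are polynomials carrying six free constants, one for each of
   V_1, ..., V_6; read backwards, the same identity shows that all these fields are
   symmetries. *)

From Pilot Require Import Defs.
(* Not [Reals]: its [Rderiv.Dx] would shadow the direction [Dx] of [Defs]. *)
From Stdlib Require Import Rbase Rfunctions Rtrigo_def Exp_prop Rpower Lra FunctionalExtensionality.
From Coquelicot Require Import Coquelicot.
Open Scope R_scope.

Ltac nonzero :=
  repeat split; repeat apply Rmult_integral_contrapositive_currified;
  try assumption; lra.

Definition eq_Omega (f g : R -> R -> R -> R) : Prop :=
  forall t x u, 0 < x -> f t x u = g t x u.

Lemma locally_pos (x : R) (P : R -> Prop) :
  0 < x -> (forall y, 0 < y -> P y) -> locally x P.
Proof.
  intros Hx HP. exists (mkposreal x Hx). intros y Hy.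
  apply HP. change (Rabs (y - x) < x) in Hy.
  apply Rabs_def2 in Hy. lra.
Qed.

Lemma pd_eq_Omega (d : dir) (f g : R -> R -> R -> R) :
  eq_Omega f g -> eq_Omega (pd d f) (pd d g).
Proof.
  intros H t x u Hx. destruct d; simpl.
  - apply Derive_ext. intros r. now apply H.
  - apply Derive_ext_loc. apply locally_pos; auto.
  - apply Derive_ext. intros r. now apply H.
Qed.

Lemma p_t_eq_Omega (f g : R -> R -> R -> R) : eq_Omega f g -> eq_Omega (p_t f) (p_t g).
Proof. apply pd_eq_Omega. Qed.

Lemma p_x_eq_Omega (f g : R -> R -> R -> R) : eq_Omega f g -> eq_Omega (p_x f) (p_x g).
Proof. apply pd_eq_Omega. Qed.

Lemma p_u_eq_Omega (f g : R -> R -> R -> R) : eq_Omega f g -> eq_Omega (p_u f) (p_u g).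
Proof. apply pd_eq_Omega. Qed.

Lemma pd_eq0_Omega (d : dir) (f : R -> R -> R -> R) :
  eq_Omega f (fun _ _ _ => 0) -> eq_Omega (pd d f) (fun _ _ _ => 0).
Proof.
  intros H t x u Hx. rewrite (pd_eq_Omega d _ _ H t x u Hx).
  destruct d; simpl; apply Derive_const.
Qed.

Lemma const_on_gt_of_is_derive0 (f : R -> R) (a : R) :
  (forall r, a < r -> is_derive f r 0) -> forall y z, a < y -> a < z -> f y = f z.
Proof.
  intros H y z Hy Hz.
  destruct (Rtotal_order y z) as [Hlt|[->|Hgt]]; [| reflexivity |].
  - apply eq_is_derive; auto. intros r Hr. apply H. lra.
  - symmetry. apply eq_is_derive; auto. intros r Hr. apply H. lra.
Qed.

Lemma const_of_is_derive0 (f : R -> R) :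
  (forall r, is_derive f r 0) -> forall y z, f y = f z.
Proof.
  intros H y z. apply (const_on_gt_of_is_derive0 f (Rmin y z - 1)); auto.
  - pose proof (Rmin_l y z); lra.
  - pose proof (Rmin_r y z); lra.
Qed.

Lemma eq_of_antiderivative (f g : R -> R) :
  (forall r, ex_derive f r) -> (forall r, is_derive g r (Derive f r)) ->
  forall t, f t = f 0 + (g t - g 0).
Proof.
  intros Hf Hg t.
  enough (E : f t - g t = f 0 - g 0) by lra.
  apply (const_of_is_derive0 (fun r => f r - g r)). intros r.
  replace 0 with (Derive f r - Derive f r) by ring.
  apply (is_derive_minus f g r); [apply Derive_correct, Hf | apply Hg].
Qed.

Lemma Rmult_eq0_reg_l (a b : R) : a <> 0 -> a * b = 0 -> b = 0.
Proof. intros Ha Hab. destruct (Rmult_integral a b Hab); [contradiction | assumption]. Qed.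

Lemma Rdiv_eq0_reg (a b : R) : b <> 0 -> a / b = 0 -> a = 0.
Proof.
  intros Hb Hab. apply (Rmult_eq0_reg_l (/ b)); [now apply Rinv_neq_0_compat |].
  rewrite Rmult_comm. exact Hab.
Qed.

Lemma quadratic_eq0 (a b c : R) :
  (forall L, a * L ^ 2 + b * L + c = 0) -> a = 0 /\ b = 0 /\ c = 0.
Proof.
  intros H. pose proof (H 0) as H0. pose proof (H 1) as H1. pose proof (H (-1)) as H2.
  lra.
Qed.

Lemma ex_pd_smooth (f : R -> R -> R -> R) (l : list dir) (d : dir) (t x u : R) :
  smooth_on f -> 0 < x -> ex_pd d (pds l f) t x u.
Proof. intros Hf Hx. exact (proj2 (Hf l t x u Hx) d). Qed.

Lemma pds_snoc (l : list dir) (d : dir) (f : R -> R -> R -> R) :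
  pds (l ++ d :: nil) f = pds l (pd d f).
Proof. induction l as [|d' l IH]; simpl; [reflexivity | now rewrite IH]. Qed.

Lemma smooth_pd (d : dir) (f : R -> R -> R -> R) : smooth_on f -> smooth_on (pd d f).
Proof. intros Hf l. rewrite <- pds_snoc. apply Hf. Qed.

Lemma u_independent (f : R -> R -> R -> R) :
  smooth_on f -> eq_Omega (p_u f) (fun _ _ _ => 0) -> eq_Omega f (fun t x _ => f t x 0).
Proof.
  intros Hf H t x u Hx. apply (const_of_is_derive0 (fun r => f t x r)). intros r.
  replace 0 with (p_u f t x r) by (apply H, Hx).
  apply Derive_correct. exact (ex_pd_smooth f nil Du t x r Hf Hx).
Qed.

Lemma x_independent (f : R -> R -> R -> R) :
  smooth_on f -> eq_Omega (p_x f) (fun _ _ _ => 0) -> eq_Omega f (fun t _ u => f t 1 u).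
Proof.
  intros Hf H t x u Hx. apply (const_on_gt_of_is_derive0 (fun r => f t r u) 0); [| exact Hx | lra].
  intros r Hr. replace 0 with (p_x f t r u) by (apply H, Hr).
  apply Derive_correct. exact (ex_pd_smooth f nil Dx t r u Hf Hr).
Qed.

Lemma u_affine (f : R -> R -> R -> R) :
  smooth_on f -> eq_Omega (p_u (p_u f)) (fun _ _ _ => 0) ->
  eq_Omega f (fun t x u => f t x 0 + u * p_u f t x 0).
Proof.
  intros Hf H t x u Hx.
  pose proof (u_independent (p_u f) (smooth_pd Du f Hf) H) as Hfu.
  enough (E : f t x u - u * p_u f t x 0 = f t x 0 - 0 * p_u f t x 0) by lra.
  apply (const_of_is_derive0 (fun r => f t x r - r * p_u f t x 0)). intros r.
  auto_derive; [exact (ex_pd_smooth f nil Du t x r Hf Hx) |].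
  change (Derive (fun r' => f t x r') r) with (p_u f t x r). rewrite (Hfu t x r Hx). ring.
Qed.

Lemma pds_slice (F : R -> R -> R -> R) (l : list dir) :
  (forall t x u, pds l (fun t x _ => F t x 0) t x u = pds l F t x 0) \/
  (forall t x u, pds l (fun t x _ => F t x 0) t x u = 0).
Proof.
  induction l as [|d l [IH|IH]]; [left; reflexivity | destruct d | right].
  - left. intros t x u. simpl. apply Derive_ext. intros r. apply IH.
  - left. intros t x u. simpl. apply Derive_ext. intros r. apply IH.
  - right. intros t x u. simpl.
    rewrite (Derive_ext _ (fun _ => pds l F t x 0)) by (intros; apply IH).
    apply Derive_const.
  - intros t x u. destruct d; simpl;
      (rewrite (Derive_ext _ (fun _ => 0)) by (intros; apply IH); apply Derive_const).
Qed.

Lemma smooth_slice (F : R -> R -> R -> R) :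
  smooth_on F -> smooth_on (fun t x _ => F t x 0).
Proof.
  intros HF l t x u Hx. destruct (pds_slice F l) as [H|H]; split.
  - apply (continuous_ext (fun p : R * R * R => pds l F (fst (fst p)) (snd (fst p)) 0)).
    { intros p. symmetry. apply H. }
    apply (continuous_comp_2 fst (fun _ => 0) (fun a b => pds l F (fst a) (snd a) b)).
    + apply continuous_fst.
    + apply continuous_const.
    + exact (proj1 (HF l t x 0 Hx)).
  - intros d. destruct d; simpl.
    + apply (ex_derive_ext (fun r => pds l F r x 0)); [intros; symmetry; apply H|].
      exact (ex_pd_smooth F l Dt t x 0 HF Hx).
    + apply (ex_derive_ext (fun r => pds l F t r 0)); [intros; symmetry; apply H|].
      exact (ex_pd_smooth F l Dx t x 0 HF Hx).
    + apply (ex_derive_ext (fun _ => pds l F t x 0)); [intros; symmetry; apply H|].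
      apply ex_derive_const.
  - apply (continuous_ext (fun _ => 0)); [intros p; symmetry; apply H|].
    apply continuous_const.
  - intros d. destruct d; simpl;
      (apply (ex_derive_ext (fun _ => 0)); [intros; symmetry; apply H | apply ex_derive_const]).
Qed.

Definition on_shell_ut (s k a l x u ux uxx : R) : R :=
  / 2 * s ^ 2 * x ^ 2 * uxx + k * x * (a - x) * ux + l * x ^ 2 * u.

Lemma is_symmetry_on_shell (s k a l : R) (tau xi phi : R -> R -> R -> R) :
  is_symmetry s k a l tau xi phi <->
  forall t x u ux uxx uxt, 0 < x ->
    pr2V_Delta s k a l tau xi phi t x u (on_shell_ut s k a l x u ux uxx) ux uxx uxt = 0.
Proof.
  split.
  - intros H t x u ux uxx uxt Hx. apply H; auto. unfold Delta, on_shell_ut. ring.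
  - intros H t x u ut ux uxx uxt Hx HD.
    replace ut with (on_shell_ut s k a l x u ux uxx)
      by (unfold Delta in HD; unfold on_shell_ut; lra).
    now apply H.
Qed.

Definition eq_residual (s k a l : R) (psi : R -> R -> R) (t x : R) : R :=
  on_shell_ut s k a l x (psi t x) (Derive (fun r => psi t r) x)
    (Derive (fun r => Derive (fun y => psi t y) r) x)
  - Derive (fun r => psi r x) t.

Lemma is_solution_residual (s k a l : R) (psi : R -> R -> R) :
  is_solution s k a l psi <->
  smooth_on (fun t x _ => psi t x) /\ forall t x, 0 < x -> eq_residual s k a l psi t x = 0.
Proof.
  unfold is_solution, eq_residual, on_shell_ut.
  split; intros [Hpsi H]; split; auto; intros t x Hx; specialize (H t x Hx); lra.
Qed.

Lemma pr2V_Delta_eq_Omega (s k a l : R) (tau xi phi tau' xi' phi' : R -> R -> R -> R)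
    (t x u ut ux uxx uxt : R) :
  eq_Omega tau tau' -> eq_Omega xi xi' -> eq_Omega phi phi' -> 0 < x ->
  pr2V_Delta s k a l tau xi phi t x u ut ux uxx uxt
  = pr2V_Delta s k a l tau' xi' phi' t x u ut ux uxx uxt.
Proof.
  intros Htau Hxi Hphi Hx.
  pose proof (fun d1 d2 => pd_eq_Omega d1 _ _ (pd_eq_Omega d2 _ _ Htau) t x u Hx) as Etau2.
  pose proof (fun d1 d2 => pd_eq_Omega d1 _ _ (pd_eq_Omega d2 _ _ Hxi) t x u Hx) as Exi2.
  pose proof (fun d1 d2 => pd_eq_Omega d1 _ _ (pd_eq_Omega d2 _ _ Hphi) t x u Hx) as Ephi2.
  pose proof (fun d => pd_eq_Omega d _ _ Htau t x u Hx) as Etau1.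
  pose proof (fun d => pd_eq_Omega d _ _ Hxi t x u Hx) as Exi1.
  pose proof (fun d => pd_eq_Omega d _ _ Hphi t x u Hx) as Ephi1.
  unfold pr2V_Delta, phi_t, phi_x, phi_xx, Dx1, Dx2, Dt1, p_t, p_x, p_u.
  rewrite !Etau2, !Exi2, !Ephi2, !Etau1, !Exi1, !Ephi1, (Hxi t x u Hx), (Hphi t x u Hx).
  reflexivity.
Qed.

Definition det_uxx (s : R) (tau xi : R -> R -> R -> R) (t x u : R) : R :=
  / 2 * s ^ 2 * x ^ 2 * p_t tau t x u + s ^ 2 * x * xi t x u - s ^ 2 * x ^ 2 * p_x xi t x u.

Definition det_ux (s k a : R) (tau xi phi : R -> R -> R -> R) (t x u : R) : R :=
  k * (a - 2 * x) * xi t x u - k * x * (a - x) * p_x xi t x u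
  + s ^ 2 * x ^ 2 * p_x (p_u phi) t x u - / 2 * s ^ 2 * x ^ 2 * p_x (p_x xi) t x u
  + p_t xi t x u + k * x * (a - x) * p_t tau t x u.

Definition det_const (s k a l : R) (tau xi phi : R -> R -> R -> R) (t x u : R) : R :=
  2 * l * x * u * xi t x u + l * x ^ 2 * phi t x u + k * x * (a - x) * p_x phi t x u
  + / 2 * s ^ 2 * x ^ 2 * p_x (p_x phi) t x u - p_t phi t x u
  + l * x ^ 2 * u * (p_t tau t x u - p_u phi t x u).

Lemma pr2V_Delta_reduced (s k a l : R) (tau xi phi : R -> R -> R -> R) (t x u ux uxx uxt : R) :
  eq_Omega (p_x tau) (fun _ _ _ => 0) -> eq_Omega (p_u tau) (fun _ _ _ => 0) ->
  eq_Omega (p_u xi) (fun _ _ _ => 0) -> 0 < x ->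
  pr2V_Delta s k a l tau xi phi t x u (on_shell_ut s k a l x u ux uxx) ux uxx uxt =
  / 2 * s ^ 2 * x ^ 2 * p_u (p_u phi) t x u * ux ^ 2
  + det_uxx s tau xi t x u * uxx + det_ux s k a tau xi phi t x u * ux
  + det_const s k a l tau xi phi t x u.
Proof.
  intros Htx Htu Hxu Hx.
  unfold pr2V_Delta, phi_t, phi_x, phi_xx, Dx1, Dx2, Dt1, det_uxx, det_ux, det_const,
    on_shell_ut, p_t, p_x, p_u in *.
  rewrite (Htx t x u Hx), (Htu t x u Hx), (Hxu t x u Hx),
    (pd_eq0_Omega Dx _ Htx t x u Hx), (pd_eq0_Omega Dx _ Htu t x u Hx),
    (pd_eq0_Omega Du _ Htu t x u Hx), (pd_eq0_Omega Dx _ Hxu t x u Hx),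
    (pd_eq0_Omega Du _ Hxu t x u Hx).
  field.
Qed.

Lemma jet_poly_eq0 (a b c d : R) :
  (forall y z, a * y ^ 2 + b * z + c * y + d = 0) -> a = 0 /\ b = 0 /\ c = 0 /\ d = 0.
Proof.
  intros H. pose proof (H 0 0). pose proof (H 0 1). pose proof (H 1 0). pose proof (H (-1) 0).
  lra.
Qed.

Section DeterminingEquations.

Variables (s k a l : R) (tau xi phi : R -> R -> R -> R).
Hypothesis Hs : s <> 0.
Hypothesis Hsym : forall t x u ux uxx uxt, 0 < x ->
  pr2V_Delta s k a l tau xi phi t x u (on_shell_ut s k a l x u ux uxx) ux uxx uxt = 0.

(* Finite differences in the free jet coordinates isolate single coefficients. *)
Let P t x u ux uxx uxt :=
  pr2V_Delta s k a l tau xi phi t x u (on_shell_ut s k a l x u ux uxx) ux uxx uxt.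

Lemma tau_x_u_eq0 : eq_Omega (p_x tau) (fun _ _ _ => 0) /\ eq_Omega (p_u tau) (fun _ _ _ => 0).
Proof.
  enough (H : forall t x u, 0 < x -> p_x tau t x u = 0 /\ p_u tau t x u = 0)
    by (split; intros t x u Hx; apply H, Hx).
  intros t x u Hx.
  assert (Ex : P t x u 0 0 1 - P t x u 0 0 0 = - (s ^ 2 * x ^ 2) * p_x tau t x u)
    by (unfold P, pr2V_Delta, phi_t, phi_x, phi_xx, Dx1, Dx2, Dt1, on_shell_ut; field).
  assert (Eu : P t x u 1 0 1 - P t x u 1 0 0 = - (s ^ 2 * x ^ 2) * (p_x tau t x u + p_u tau t x u))
    by (unfold P, pr2V_Delta, phi_t, phi_x, phi_xx, Dx1, Dx2, Dt1, on_shell_ut; field).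
  unfold P in Ex, Eu. rewrite !Hsym in Ex, Eu by exact Hx.
  assert (s ^ 2 * x ^ 2 <> 0) by nonzero.
  assert (p_x tau t x u = 0) by (apply (Rmult_eq_reg_l (- (s ^ 2 * x ^ 2))); lra).
  split; auto. apply (Rmult_eq_reg_l (- (s ^ 2 * x ^ 2))); lra.
Qed.

Lemma xi_u_eq0 : eq_Omega (p_u xi) (fun _ _ _ => 0).
Proof.
  destruct tau_x_u_eq0 as [Htx Htu]. intros t x u Hx.
  assert (E : P t x u 1 1 0 - P t x u 1 0 0 - P t x u 0 1 0 + P t x u 0 0 0
              = - (s ^ 2 * x ^ 2) * p_u xi t x u).
  { unfold P, pr2V_Delta, phi_t, phi_x, phi_xx, Dx1, Dx2, Dt1, on_shell_ut, p_t, p_x, p_u in *.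
    rewrite (Htx t x u Hx), (Htu t x u Hx), (pd_eq0_Omega Dx _ Htx t x u Hx),
      (pd_eq0_Omega Dx _ Htu t x u Hx), (pd_eq0_Omega Du _ Htu t x u Hx).
    field. }
  unfold P in E. rewrite !Hsym in E by exact Hx.
  assert (s ^ 2 * x ^ 2 <> 0) by nonzero.
  apply (Rmult_eq_reg_l (- (s ^ 2 * x ^ 2))); lra.
Qed.

Lemma determining_equations t x u : 0 < x ->
  p_u (p_u phi) t x u = 0 /\ det_uxx s tau xi t x u = 0 /\ det_ux s k a tau xi phi t x u = 0.
Proof.
  intros Hx. destruct tau_x_u_eq0 as [Htx Htu].
  destruct (jet_poly_eq0 (/ 2 * s ^ 2 * x ^ 2 * p_u (p_u phi) t x u) (det_uxx s tau xi t x u)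
              (det_ux s k a tau xi phi t x u) (det_const s k a l tau xi phi t x u))
    as [Huu [Huxx [Hux _]]].
  { intros y z. rewrite <- (pr2V_Delta_reduced s k a l tau xi phi t x u y z 0 Htx Htu xi_u_eq0 Hx).
    apply Hsym, Hx. }
  repeat split; auto.
  assert (s ^ 2 * x ^ 2 <> 0) by nonzero.
  apply (Rmult_eq_reg_l (/ 2 * s ^ 2 * x ^ 2)); lra.
Qed.

End DeterminingEquations.

Definition lambda_crit (s k : R) : R := k ^ 2 / (2 * s ^ 2).

Section Ansatz.

Variables (s k : R).
Hypothesis Hs : s <> 0.

Definition tau_ansatz (T0 : R -> R) : R -> R -> R -> R := fun t _ _ => T0 t.

Definition xi_ansatz (T0 D : R -> R) : R -> R -> R -> R :=
  fun t x _ => x * (/ 2 * Derive T0 t * ln x + D t).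

(* The u-coefficient of phi forced by the u_x-equation, up to a function of t alone. *)
Definition beta (T1 T2 D D1 x : R) : R :=
  k / s ^ 2 * (/ 2 * T1 * x * ln x + D * x) + T1 * ln x / 4
  - T2 * ln x ^ 2 / (4 * s ^ 2) - D1 * ln x / s ^ 2.

Definition beta_dx (T1 T2 D D1 x : R) : R :=
  k / s ^ 2 * (/ 2 * T1 * (ln x + 1) + D) + T1 / (4 * x)
  - T2 * ln x / (2 * s ^ 2 * x) - D1 / (s ^ 2 * x).

Definition beta_dxx (T1 T2 D D1 x : R) : R :=
  k / s ^ 2 * (T1 / (2 * x)) - T1 / (4 * x ^ 2)
  - T2 * (1 - ln x) / (2 * s ^ 2 * x ^ 2) + D1 / (s ^ 2 * x ^ 2).

Definition phi_ansatz (T0 D G : R -> R) (psi : R -> R -> R) : R -> R -> R -> R :=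
  fun t x u => u * (beta (Derive T0 t) (Derive (Derive T0) t) (D t) (Derive D t) x + G t)
               + psi t x.

Definition ln_poly (T0 D G : R -> R) (t L : R) : R :=
  Derive (Derive (Derive T0)) t / (4 * s ^ 2) * L ^ 2 + Derive (Derive D) t / s ^ 2 * L
  + (Derive D t / 2 - s ^ 2 * Derive T0 t / 8 - Derive (Derive T0) t / 4 - Derive G t).

Lemma beta_at_1 (T1 T2 D D1 : R) : beta T1 T2 D D1 1 = k / s ^ 2 * D.
Proof. unfold beta. rewrite ln_1. field. exact Hs. Qed.

Variables (T0 D G : R -> R) (psi : R -> R -> R).
Hypotheses (HT1 : forall t, ex_derive (Derive T0) t)
  (HT2 : forall t, ex_derive (Derive (Derive T0)) t)
  (HD : forall t, ex_derive D t) (HD1 : forall t, ex_derive (Derive D) t)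
  (HG : forall t, ex_derive G t) (Hpsi : smooth_on (fun t x _ => psi t x)).

Let B (t : R) : R -> R := beta (Derive T0 t) (Derive (Derive T0) t) (D t) (Derive D t).

Lemma tau_ansatz_dx_du :
  eq_Omega (p_x (tau_ansatz T0)) (fun _ _ _ => 0) /\
  eq_Omega (p_u (tau_ansatz T0)) (fun _ _ _ => 0).
Proof. split; intros t x u _; unfold p_x, p_u, pd, tau_ansatz; apply Derive_const. Qed.

Lemma xi_ansatz_du : eq_Omega (p_u (xi_ansatz T0 D)) (fun _ _ _ => 0).
Proof. intros t x u _. unfold p_u, pd, xi_ansatz. apply Derive_const. Qed.

Lemma xi_ansatz_dx :
  eq_Omega (p_x (xi_ansatz T0 D)) (fun t x _ => / 2 * Derive T0 t * (ln x + 1) + D t).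
Proof.
  intros t x u Hx. unfold p_x, pd, xi_ansatz.
  apply is_derive_unique. auto_derive; [nonzero |]. field. nonzero.
Qed.

Lemma xi_ansatz_dxx :
  eq_Omega (p_x (p_x (xi_ansatz T0 D))) (fun t x _ => Derive T0 t / (2 * x)).
Proof.
  intros t x u Hx. rewrite (p_x_eq_Omega _ _ xi_ansatz_dx t x u Hx).
  apply is_derive_unique. auto_derive; [nonzero |]. field. nonzero.
Qed.

Lemma xi_ansatz_dt :
  eq_Omega (p_t (xi_ansatz T0 D))
    (fun t x _ => x * (/ 2 * Derive (Derive T0) t * ln x + Derive D t)).
Proof.
  intros t x u Hx. unfold p_t, pd, xi_ansatz.
  apply is_derive_unique. auto_derive; [auto |].
  change (fun r => Derive T0 r) with (Derive T0). change (fun r => D r) with D. ring.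
Qed.

Lemma phi_ansatz_du : eq_Omega (p_u (phi_ansatz T0 D G psi)) (fun t x _ => B t x + G t).
Proof.
  intros t x u Hx. unfold p_u, pd, phi_ansatz.
  apply is_derive_unique. auto_derive; [auto |]. unfold B. ring.
Qed.

Lemma phi_ansatz_duu : eq_Omega (p_u (p_u (phi_ansatz T0 D G psi))) (fun _ _ _ => 0).
Proof.
  intros t x u Hx. rewrite (p_u_eq_Omega _ _ phi_ansatz_du t x u Hx).
  unfold p_u, pd. apply Derive_const.
Qed.

Lemma phi_ansatz_dxu :
  eq_Omega (p_x (p_u (phi_ansatz T0 D G psi)))
    (fun t x _ => beta_dx (Derive T0 t) (Derive (Derive T0) t) (D t) (Derive D t) x).
Proof.
  intros t x u Hx. rewrite (p_x_eq_Omega _ _ phi_ansatz_du t x u Hx).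
  unfold B, beta. apply is_derive_unique. auto_derive; [nonzero |].
  unfold beta_dx. field. nonzero.
Qed.

Lemma phi_ansatz_dx :
  eq_Omega (p_x (phi_ansatz T0 D G psi))
    (fun t x u => u * beta_dx (Derive T0 t) (Derive (Derive T0) t) (D t) (Derive D t) x
                  + Derive (fun r => psi t r) x).
Proof.
  intros t x u Hx. unfold p_x, pd, phi_ansatz, beta. apply is_derive_unique.
  auto_derive.
  - repeat split; try nonzero. exact (ex_pd_smooth _ nil Dx t x 0 Hpsi Hx).
  - unfold beta_dx. field. nonzero.
Qed.

Lemma phi_ansatz_dxx :
  eq_Omega (p_x (p_x (phi_ansatz T0 D G psi)))
    (fun t x u => u * beta_dxx (Derive T0 t) (Derive (Derive T0) t) (D t) (Derive D t) x
                  + Derive (fun r => Derive (fun y => psi t y) r) x).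
Proof.
  intros t x u Hx. rewrite (p_x_eq_Omega _ _ phi_ansatz_dx t x u Hx).
  unfold pd, beta_dx. apply is_derive_unique. auto_derive.
  - repeat split; try nonzero. exact (ex_pd_smooth _ (Dx :: nil) Dx t x 0 Hpsi Hx).
  - unfold beta_dxx. field. nonzero.
Qed.

Lemma phi_ansatz_dt :
  eq_Omega (p_t (phi_ansatz T0 D G psi))
    (fun t x u => u * (beta (Derive (Derive T0) t) (Derive (Derive (Derive T0)) t)
                         (Derive D t) (Derive (Derive D) t) x + Derive G t)
                  + Derive (fun r => psi r x) t).
Proof.
  intros t x u Hx. unfold p_t, pd, phi_ansatz, beta. apply is_derive_unique.
  auto_derive.
  - repeat split; auto. exact (ex_pd_smooth _ nil Dt t x 0 Hpsi Hx).
  - change (fun r => Derive T0 r) with (Derive T0).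
    change (fun r => Derive (Derive T0) r) with (Derive (Derive T0)).
    change (fun r => D r) with D. change (fun r => Derive D r) with (Derive D).
    change (fun r => G r) with G. field. nonzero.
Qed.

(* The terms in x^2 and x^2 ln x carry the factor lambda - k^2 / (2 sigma^2), so they vanish
   exactly for lambda = lambda_crit. *)
Lemma pr2V_Delta_ansatz (t x u ux uxx uxt : R) : 0 < x ->
  pr2V_Delta s k 0 (lambda_crit s k) (tau_ansatz T0) (xi_ansatz T0 D) (phi_ansatz T0 D G psi)
    t x u (on_shell_ut s k 0 (lambda_crit s k) x u ux uxx) ux uxx uxt
  = u * ln_poly T0 D G t (ln x) + eq_residual s k 0 (lambda_crit s k) psi t x.
Proof.
  intros Hx. destruct tau_ansatz_dx_du as [Htx Htu].
  rewrite (pr2V_Delta_reduced _ _ _ _ _ _ _ t x u ux uxx uxt Htx Htu xi_ansatz_du Hx).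
  unfold det_uxx, det_ux, det_const.
  rewrite (phi_ansatz_duu t x u Hx), (phi_ansatz_du t x u Hx), (phi_ansatz_dxu t x u Hx),
    (phi_ansatz_dx t x u Hx), (phi_ansatz_dxx t x u Hx), (phi_ansatz_dt t x u Hx),
    (xi_ansatz_dx t x u Hx), (xi_ansatz_dxx t x u Hx), (xi_ansatz_dt t x u Hx).
  change (p_t (tau_ansatz T0) t x u) with (Derive T0 t).
  unfold B, xi_ansatz, phi_ansatz, eq_residual, on_shell_ut, ln_poly, beta, beta_dx, beta_dxx,
    lambda_crit.
  field. nonzero.
Qed.

End Ansatz.

Definition lincomb (c V : nat -> R) : R :=
  c 1%nat * V 1%nat + c 2%nat * V 2%nat + c 3%nat * V 3%nat
  + c 4%nat * V 4%nat + c 5%nat * V 5%nat + c 6%nat * V 6%nat.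

Definition tau_poly (c : nat -> R) (t : R) : R := c 1%nat + c 2%nat * t + c 3%nat * t ^ 2.

Definition delta_poly (c : nat -> R) (t : R) : R := c 4%nat + c 5%nat * t.

Definition gamma_poly (s : R) (c : nat -> R) (t : R) : R :=
  c 6%nat + (c 5%nat / 2 - s ^ 2 * c 2%nat / 8 - c 3%nat / 2) * t - s ^ 2 * c 3%nat * t ^ 2 / 8.

Section Generators.

Variables (s k : R) (c : nat -> R).
Hypothesis Hs : s <> 0.

Lemma Derive_tau_poly : Derive (tau_poly c) = fun t => c 2%nat + 2 * c 3%nat * t.
Proof.
  apply functional_extensionality. intros t. apply is_derive_unique.
  unfold tau_poly. auto_derive; [trivial | ring].
Qed.

Lemma Derive2_tau_poly : Derive (Derive (tau_poly c)) = fun _ => 2 * c 3%nat.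
Proof.
  rewrite Derive_tau_poly. apply functional_extensionality. intros t.
  apply is_derive_unique. auto_derive; [trivial | ring].
Qed.

Lemma Derive_delta_poly : Derive (delta_poly c) = fun _ => c 5%nat.
Proof.
  apply functional_extensionality. intros t. apply is_derive_unique.
  unfold delta_poly. auto_derive; [trivial | ring].
Qed.

Lemma Derive_gamma_poly (t : R) :
  Derive (gamma_poly s c) t
  = c 5%nat / 2 - s ^ 2 * c 2%nat / 8 - c 3%nat / 2 - s ^ 2 * c 3%nat * t / 4.
Proof.
  apply is_derive_unique. unfold gamma_poly. auto_derive; [trivial | field].
Qed.

Lemma ln_poly_generators (t L : R) :
  ln_poly s (tau_poly c) (delta_poly c) (gamma_poly s c) t L = 0.
Proof.
  unfold ln_poly. rewrite Derive2_tau_poly, Derive_delta_poly, Derive_tau_poly,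
    Derive_gamma_poly, !Derive_const.
  field. exact Hs.
Qed.

Lemma lincomb_generators (psi : R -> R -> R) (t x u : R) :
  lincomb c (fun i => tauV i t x u) = tau_ansatz (tau_poly c) t x u /\
  lincomb c (fun i => xiV i t x u) = xi_ansatz (tau_poly c) (delta_poly c) t x u /\
  lincomb c (fun i => phiV s k i t x u) + psi t x
    = phi_ansatz s k (tau_poly c) (delta_poly c) (gamma_poly s c) psi t x u.
Proof.
  unfold lincomb, tau_ansatz, xi_ansatz, phi_ansatz, beta.
  rewrite Derive2_tau_poly, Derive_delta_poly, Derive_tau_poly.
  unfold tau_poly, delta_poly, gamma_poly. simpl.
  repeat split; field; exact Hs.
Qed.

End Generators.

Section Classification.

Variables (s k : R) (tau xi phi : R -> R -> R -> R).
Hypotheses (Hs : s <> 0) (Htau : smooth_on tau) (Hxi : smooth_on xi) (Hphi : smooth_on phi).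
Hypothesis Hsym : is_symmetry s k 0 (lambda_crit s k) tau xi phi.

Let Hshell := proj1 (is_symmetry_on_shell s k 0 (lambda_crit s k) tau xi phi) Hsym.

Let T0 (t : R) : R := tau t 1 0.
Let D (t : R) : R := xi t 1 0.
Let G (t : R) : R := p_u phi t 1 0 - k / s ^ 2 * D t.
Let psi (t x : R) : R := phi t x 0.

Lemma ex_derive_T0 t : ex_derive T0 t.
Proof. exact (ex_pd_smooth tau nil Dt t 1 0 Htau Rlt_0_1). Qed.
Lemma ex_derive_T1 t : ex_derive (Derive T0) t.
Proof. exact (ex_pd_smooth tau (Dt :: nil) Dt t 1 0 Htau Rlt_0_1). Qed.
Lemma ex_derive_T2 t : ex_derive (Derive (Derive T0)) t.
Proof. exact (ex_pd_smooth tau (Dt :: Dt :: nil) Dt t 1 0 Htau Rlt_0_1). Qed.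
Lemma ex_derive_D t : ex_derive D t.
Proof. exact (ex_pd_smooth xi nil Dt t 1 0 Hxi Rlt_0_1). Qed.
Lemma ex_derive_D1 t : ex_derive (Derive D) t.
Proof. exact (ex_pd_smooth xi (Dt :: nil) Dt t 1 0 Hxi Rlt_0_1). Qed.
Lemma ex_derive_G t : ex_derive G t.
Proof.
  unfold G. auto_derive. split; [exact (ex_pd_smooth phi (Du :: nil) Dt t 1 0 Hphi Rlt_0_1) |].
  split; [exact (ex_derive_D t) | trivial].
Qed.

Lemma tau_eq_ansatz : eq_Omega tau (tau_ansatz T0).
Proof.
  destruct (tau_x_u_eq0 _ _ _ _ _ _ _ Hs Hshell) as [Htx Htu].
  intros t x u Hx. rewrite (u_independent tau Htau Htu t x u Hx).
  exact (x_independent tau Htau Htx t x 0 Hx).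
Qed.

Lemma xi_eq_ansatz : eq_Omega xi (xi_ansatz T0 D).
Proof.
  intros t x u Hx. rewrite (u_independent xi Hxi (xi_u_eq0 _ _ _ _ _ _ _ Hs Hshell) t x u Hx).
  set (T1 := Derive T0 t).
  assert (Hdx : forall r, 0 < r -> p_x xi t r 0 = / 2 * T1 + xi t r 0 / r).
  { intros r Hr. destruct (determining_equations _ _ _ _ _ _ _ Hs Hshell t r 0 Hr) as [_ [Huxx _]].
    unfold det_uxx in Huxx. rewrite (p_t_eq_Omega _ _ tau_eq_ansatz t r 0 Hr) in Huxx.
    change (p_t (tau_ansatz T0) t r 0) with T1 in Huxx.
    apply (Rmult_eq_reg_l (s ^ 2 * r ^ 2)); [| nonzero].
    transitivity (/ 2 * s ^ 2 * r ^ 2 * T1 + s ^ 2 * r * xi t r 0); [lra | field; lra]. }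
  assert (Hg : xi t x 0 / x - / 2 * T1 * ln x = xi t 1 0 / 1 - / 2 * T1 * ln 1).
  { apply (const_on_gt_of_is_derive0 (fun r => xi t r 0 / r - / 2 * T1 * ln r) 0); try lra.
    intros r Hr. auto_derive.
    - repeat split; try lra. exact (ex_pd_smooth xi nil Dx t r 0 Hxi Hr).
    - change (Derive (fun y => xi t y 0) r) with (p_x xi t r 0).
      rewrite (Hdx r Hr). field. lra. }
  rewrite ln_1 in Hg. unfold xi_ansatz. fold T1. unfold D.
  replace (xi t x 0) with (x * ((xi t x 0 / x - / 2 * T1 * ln x) + / 2 * T1 * ln x))
    by (field; lra).
  rewrite Hg. field.
Qed.

Lemma phi_u_eq_beta t x : 0 < x ->
  p_u phi t x 0
  = beta s k (Derive T0 t) (Derive (Derive T0) t) (D t) (Derive D t) x + G t.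
Proof.
  intros Hx.
  set (B := beta s k (Derive T0 t) (Derive (Derive T0) t) (D t) (Derive D t)).
  assert (Hdxu : forall r, 0 < r ->
    p_x (p_u phi) t r 0 = beta_dx s k (Derive T0 t) (Derive (Derive T0) t) (D t) (Derive D t) r).
  { intros r Hr. destruct (determining_equations _ _ _ _ _ _ _ Hs Hshell t r 0 Hr) as [_ [_ Hux]].
    unfold det_ux in Hux.
    rewrite (p_t_eq_Omega _ _ tau_eq_ansatz t r 0 Hr), (p_t_eq_Omega _ _ xi_eq_ansatz t r 0 Hr),
      (p_x_eq_Omega _ _ (p_x_eq_Omega _ _ xi_eq_ansatz) t r 0 Hr),
      (p_x_eq_Omega _ _ xi_eq_ansatz t r 0 Hr), (xi_eq_ansatz t r 0 Hr) in Hux.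
    rewrite (xi_ansatz_dt _ _ ex_derive_T1 ex_derive_D t r 0 Hr),
      (xi_ansatz_dxx _ _ t r 0 Hr), (xi_ansatz_dx _ _ t r 0 Hr) in Hux.
    change (p_t (tau_ansatz T0) t r 0) with (Derive T0 t) in Hux.
    unfold xi_ansatz in Hux.
    apply Rminus_diag_uniq, (Rmult_eq0_reg_l (s ^ 2 * r ^ 2)); [nonzero |].
    etransitivity; [| exact Hux]. unfold beta_dx. field. nonzero. }
  enough (E : p_u phi t x 0 - B x = p_u phi t 1 0 - B 1)
    by (unfold B in E |- *; rewrite beta_at_1 in E by exact Hs; unfold G; lra).
  apply (const_on_gt_of_is_derive0 (fun r => p_u phi t r 0 - B r) 0); try lra.
  intros r Hr. unfold B, beta. auto_derive.
  - repeat split; try nonzero. exact (ex_pd_smooth phi (Du :: nil) Dx t r 0 Hphi Hr).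
  - change (Derive (fun y => p_u phi t y 0) r) with (p_x (p_u phi) t r 0).
    rewrite (Hdxu r Hr). unfold beta_dx. field. nonzero.
Qed.

Lemma phi_eq_ansatz : eq_Omega phi (phi_ansatz s k T0 D G psi).
Proof.
  assert (Huu : eq_Omega (p_u (p_u phi)) (fun _ _ _ => 0))
    by (intros t x u Hx; apply (determining_equations _ _ _ _ _ _ _ Hs Hshell t x u Hx)).
  intros t x u Hx. rewrite (u_affine phi Hphi Huu t x u Hx), (phi_u_eq_beta t x Hx).
  unfold phi_ansatz, psi. ring.
Qed.

Lemma pr2V_Delta_on_shell_ansatz t x u : 0 < x ->
  u * ln_poly s T0 D G t (ln x) + eq_residual s k 0 (lambda_crit s k) psi t x = 0.
Proof.
  intros Hx.
  rewrite <- (pr2V_Delta_ansatz s k Hs T0 D G psi ex_derive_T1 ex_derive_T2 ex_derive_D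
               ex_derive_D1 ex_derive_G (smooth_slice phi Hphi) t x u 0 0 0 Hx).
  rewrite <- (pr2V_Delta_eq_Omega _ _ _ _ _ _ _ _ _ _ t x u _ 0 0 0
                tau_eq_ansatz xi_eq_ansatz phi_eq_ansatz Hx).
  apply Hshell, Hx.
Qed.

Lemma psi_residual_eq0 t x : 0 < x -> eq_residual s k 0 (lambda_crit s k) psi t x = 0.
Proof. intros Hx. pose proof (pr2V_Delta_on_shell_ansatz t x 0 Hx). lra. Qed.

Lemma ln_poly_coefficients_eq0 t :
  Derive (Derive (Derive T0)) t = 0 /\ Derive (Derive D) t = 0 /\
  Derive G t = Derive D t / 2 - s ^ 2 * Derive T0 t / 8 - Derive (Derive T0) t / 4.
Proof.
  assert (Hpoly : forall L, ln_poly s T0 D G t L = 0).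
  { intros L. pose proof (pr2V_Delta_on_shell_ansatz t (exp L) 1 (exp_pos L)) as H.
    rewrite ln_exp, (psi_residual_eq0 t (exp L) (exp_pos L)) in H. lra. }
  destruct (quadratic_eq0 _ _ _ Hpoly) as (H2 & H1 & H0).
  split; [| split].
  - apply (Rdiv_eq0_reg _ (4 * s ^ 2)); [nonzero | exact H2].
  - apply (Rdiv_eq0_reg _ (s ^ 2)); [nonzero | exact H1].
  - lra.
Qed.

Lemma Derive2_T0_const t : Derive (Derive T0) t = Derive (Derive T0) 0.
Proof.
  apply const_of_is_derive0. intros r.
  rewrite <- (proj1 (ln_poly_coefficients_eq0 r)). apply Derive_correct, ex_derive_T2.
Qed.

Lemma Derive_D_const t : Derive D t = Derive D 0.
Proof.
  apply const_of_is_derive0. intros r.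
  rewrite <- (proj1 (proj2 (ln_poly_coefficients_eq0 r))). apply Derive_correct, ex_derive_D1.
Qed.

Lemma Derive_T0_affine t : Derive T0 t = Derive T0 0 + Derive (Derive T0) 0 * t.
Proof.
  assert (Hg : forall r, is_derive (fun r => Derive (Derive T0) 0 * r) r (Derive (Derive T0) r))
    by (intros r; rewrite (Derive2_T0_const r); auto_derive; [trivial | ring]).
  rewrite (eq_of_antiderivative _ _ ex_derive_T1 Hg t). ring.
Qed.

Let c (n : nat) : R :=
  match n with
  | 1%nat => T0 0 | 2%nat => Derive T0 0 | 3%nat => Derive (Derive T0) 0 / 2
  | 4%nat => D 0 | 5%nat => Derive D 0 | 6%nat => G 0 | _ => 0
  end.

Lemma T0_eq_tau_poly : T0 = tau_poly c.
Proof.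
  assert (Hg : forall r, is_derive
            (fun r => Derive T0 0 * r + Derive (Derive T0) 0 / 2 * r ^ 2) r (Derive T0 r))
    by (intros r; rewrite (Derive_T0_affine r); auto_derive; [trivial | field]).
  apply functional_extensionality. intros t.
  rewrite (eq_of_antiderivative _ _ ex_derive_T0 Hg t). unfold tau_poly, c. field.
Qed.

Lemma D_eq_delta_poly : D = delta_poly c.
Proof.
  assert (Hg : forall r, is_derive (fun r => Derive D 0 * r) r (Derive D r))
    by (intros r; rewrite (Derive_D_const r); auto_derive; [trivial | ring]).
  apply functional_extensionality. intros t.
  rewrite (eq_of_antiderivative _ _ ex_derive_D Hg t). unfold delta_poly, c. ring.
Qed.

Lemma G_eq_gamma_poly : G = gamma_poly s c.
Proof.
  assert (Hg : forall r, is_derive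
    (fun r => (Derive D 0 / 2 - s ^ 2 * Derive T0 0 / 8 - Derive (Derive T0) 0 / 4) * r
              - s ^ 2 * Derive (Derive T0) 0 * r ^ 2 / 16) r (Derive G r)).
  { intros r. rewrite (proj2 (proj2 (ln_poly_coefficients_eq0 r))), (Derive_T0_affine r),
      (Derive2_T0_const r), (Derive_D_const r).
    auto_derive; [trivial | field]. }
  apply functional_extensionality. intros t.
  rewrite (eq_of_antiderivative _ _ ex_derive_G Hg t). unfold gamma_poly, c. field.
Qed.

Lemma generators_of_symmetry :
  exists (c : nat -> R) (psi : R -> R -> R),
    is_solution s k 0 (lambda_crit s k) psi /\
    forall t x u, 0 < x ->
      tau t x u = lincomb c (fun i => tauV i t x u) /\
      xi t x u = lincomb c (fun i => xiV i t x u) /\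
      phi t x u = lincomb c (fun i => phiV s k i t x u) + psi t x.
Proof.
  exists c, psi. split.
  - apply is_solution_residual. split; [exact (smooth_slice phi Hphi) | exact psi_residual_eq0].
  - intros t x u Hx. destruct (lincomb_generators s k c Hs psi t x u) as (E1 & E2 & E3).
    rewrite E1, E2, E3, <- T0_eq_tau_poly, <- D_eq_delta_poly, <- G_eq_gamma_poly.
    split; [| split]; [apply tau_eq_ansatz | apply xi_eq_ansatz | apply phi_eq_ansatz]; exact Hx.
Qed.

End Classification.

Lemma symmetry_of_generators (s k : R) (c : nat -> R) (psi : R -> R -> R)
    (tau xi phi : R -> R -> R -> R) :
  s <> 0 -> is_solution s k 0 (lambda_crit s k) psi ->
  (forall t x u, 0 < x ->
     tau t x u = lincomb c (fun i => tauV i t x u) /\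
     xi t x u = lincomb c (fun i => xiV i t x u) /\
     phi t x u = lincomb c (fun i => phiV s k i t x u) + psi t x) ->
  is_symmetry s k 0 (lambda_crit s k) tau xi phi.
Proof.
  intros Hs Hsol H. apply is_solution_residual in Hsol as [Hpsi Hres].
  assert (Hansatz :
    eq_Omega tau (tau_ansatz (tau_poly c)) /\
    eq_Omega xi (xi_ansatz (tau_poly c) (delta_poly c)) /\
    eq_Omega phi (phi_ansatz s k (tau_poly c) (delta_poly c) (gamma_poly s c) psi)).
  { split; [| split]; intros t x u Hx;
      destruct (H t x u Hx) as (E1 & E2 & E3);
      destruct (lincomb_generators s k c Hs psi t x u) as (F1 & F2 & F3); congruence. }
  destruct Hansatz as (Etau & Exi & Ephi).
  apply is_symmetry_on_shell. intros t x u ux uxx uxt Hx.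
  rewrite (pr2V_Delta_eq_Omega _ _ _ _ _ _ _ _ _ _ t x u _ ux uxx uxt Etau Exi Ephi Hx).
  rewrite pr2V_Delta_ansatz; auto.
  - rewrite ln_poly_generators, Hres by auto. ring.
  - intros r. rewrite Derive_tau_poly. auto_derive. trivial.
  - intros r. rewrite Derive2_tau_poly. auto_derive. trivial.
  - intros r. unfold delta_poly. auto_derive. trivial.
  - intros r. rewrite Derive_delta_poly. auto_derive. trivial.
  - intros r. unfold gamma_poly. auto_derive. trivial.
Qed.

Theorem proposition2p1 (sigma k alpha lambda : R)
    (Hsigma : 0 < sigma) (Hk : 0 < k) (Halpha : 0 <= alpha)
    (Halpha0 : alpha = 0) (Hlambda : lambda = k ^ 2 / (2 * sigma ^ 2))
    (tau xi phi : R -> R -> R -> R) :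
  smooth_on tau -> smooth_on xi -> smooth_on phi ->
  (is_symmetry sigma k alpha lambda tau xi phi <->
   exists (c : nat -> R) (psi : R -> R -> R),
     is_solution sigma k alpha lambda psi /\
     forall t x u : R, 0 < x ->
       tau t x u = c 1%nat * tauV 1 t x u + c 2%nat * tauV 2 t x u + c 3%nat * tauV 3 t x u + c 4%nat * tauV 4 t x u + c 5%nat * tauV 5 t x u + c 6%nat * tauV 6 t x u /\
       xi t x u = c 1%nat * xiV 1 t x u + c 2%nat * xiV 2 t x u + c 3%nat * xiV 3 t x u + c 4%nat * xiV 4 t x u + c 5%nat * xiV 5 t x u + c 6%nat * xiV 6 t x u /\
       phi t x u = c 1%nat * phiV sigma k 1 t x u + c 2%nat * phiV sigma k 2 t x u + c 3%nat * phiV sigma k 3 t x u + c 4%nat * phiV sigma k 4 t x u + c 5%nat * phiV sigma k 5 t x u + c 6%nat * phiV sigma k 6 t x u + psi t x).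
Proof.
  intros Htau Hxi Hphi. subst alpha lambda.
  assert (Hs : sigma <> 0) by lra.
  split.
  - intros Hsym. exact (generators_of_symmetry sigma k tau xi phi Hs Htau Hxi Hphi Hsym).
  - intros (c & psi & Hpsi & H). exact (symmetry_of_generators sigma k c psi tau xi phi Hs Hpsi H).
Qed.
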